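(* Let $n\ge 3$. For $3\le i\le n$ let $R_i=\{(1\,2)(k\,i)\mid 1\le k<i\}\cup\{e\}\subseteq A_i\subseteq A_n$. Then every $v\in A_n$ can be written as $v=v_3v_4\cdots v_n$ with $v_i\in R_i$ for each $3\le i\le n$, and these elements $v_3,\dots,v_n$ are uniquely determined by $v$.
   Context: $S_n$ is the symmetric group on $[n]=\{1,\dots,n\}$, $A_n$ the alternating group (even permutations), and $e$ the identity. For $m\le n$, $S_m$ (and $A_m$) is regarded as the subgroup of $S_n$ fixing $m+1,\dots,n$. Products are compositions of permutations, with the rightmost factor applied first; $(k\,i)$ denotes a transposition, and $(1\,2)(1\,i)$, $(1\,2)(2\,i)$ are 3-cycles. *)

From mathcomp Require Import all_boot all_fingroup.
Set Implicit Arguments. Unset Strict Implicit. Unset Printing Implicit Defensive.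
Local Open Scope group_scope.

(* Points 1..n of the paper are the ordinals 0..n-1 of 'I_n; the paper's
   point j corresponds to the ordinal with value j-1. So paper's i with
   3 <= i <= n is an ordinal i : 'I_n with 2 <= i, paper's "1" is the
   ordinal of value 0 and paper's "2" the ordinal of value 1. *)

(* The paper composes right-to-left,
   so (1 2)(k i) is "first (k i), then (1 2)", which in MathComp's
   left-to-right permutation product is  tperm k i * tperm a b. *)
Definition Rset (n : nat) (i : 'I_n) : {set {perm 'I_n}} :=
  [set s : {perm 'I_n} | (s == 1) ||
     [exists k : 'I_n, exists a : 'I_n, exists b : 'I_n,
        [&& (val k < val i)%N, (val a == 0)%N, (val b == 1)%N & s == tperm k i * tperm a b]]].

(* The paper's product v_3 v_4 ... v_n (rightmost factor applied first),
   i.e. x |-> v_3 (v_4 ( ... (v_n x))).  In MathComp ((s * t) x = t (s x))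
   this is v_n * v_(n-1) * ... * v_3. *)
Definition paper_prod (n : nat) (f : 'I_n -> {perm 'I_n}) : {perm 'I_n} :=
  \prod_(i <- rev (enum 'I_n) | (2 <= val i)%N) f i.

From mathcomp Require Import all_boot all_fingroup.
From mathcomp Require Import zify.
Set Implicit Arguments. Unset Strict Implicit. Unset Printing Implicit Defensive.
Local Open Scope group_scope.

(* Every r in R_i fixes the points above i, and r |-> r^-1(i) is a bijection
   from R_i onto {1, ..., i}.  In v = v_3 ... v_n the factors v_3, ..., v_(n-1)
   fix n, so v_n is forced to be the element of R_n with v_n^-1(n) = v^-1(n);
   with this choice v v_n^-1 is again even (all of R_i is) and fixes n, and we
   recurse.  What remains at the end is an even permutation of {1, 2}, hence e. *)

Lemma perm_on_prod (T : finType) (I : eqType) (S : {set T}) (r : seq I)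
    (F : I -> {perm T}) :
  (forall i, i \in r -> perm_on S (F i)) -> perm_on S (\prod_(i <- r) F i).
Proof.
move=> onS; rewrite big_seq.
by apply: (big_ind (perm_on S)) => //; [exact: perm_on1 | exact: perm_onM].
Qed.

Lemma even_perm_on_card2 (T : finType) (S : {set T}) (s : {perm T}) :
  #|S| <= 2 -> perm_on S s -> ~~ odd_perm s -> s = 1.
Proof.
case: (leqP #|S| 1) => [S_le1 _ onS _ | S_gt1 S_le2 onS].
  exact: perm_on_id onS S_le1.
have /cards2P[x [y [xy defS]]] : #|S| == 2 by rewrite eqn_leq S_le2.
have one_tperm : (1 : {perm T}) != tperm x y.
  by apply/eqP => /(congr1 (@odd_perm T)); rewrite odd_perm1 odd_tperm xy.
have onSE : [set 1; tperm x y] =i perm_on S.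
  apply/subset_cardP; first by rewrite card_perm cards2 one_tperm defS cards2 xy.
  apply/subsetP => t; rewrite !inE => /orP[]/eqP->; first exact: perm_on1.
  by rewrite defS; exact: tperm_on.
have := onSE s; rewrite [_ \in perm_on _]onS !inE => /orP[]/eqP-> //.
by rewrite odd_tperm xy.
Qed.

Section ProductOfR.

Variable n : nat.
Implicit Types (a b i j k x : 'I_n) (r v w : {perm 'I_n}) (f g : 'I_n -> {perm 'I_n}).

Definition below (m : nat) : {set 'I_n} := [set x : 'I_n | x < m].

Lemma mem_below m x : (x \in below m) = (x < m).
Proof. by rewrite inE. Qed.

Lemma card_below m : #|below m| <= m.
Proof.
rewrite cardE -(size_map val) -[X in _ <= X](size_iota 0 m); apply: uniq_leq_size.
  by rewrite (map_inj_uniq val_inj) enum_uniq.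
by move=> y /mapP[x]; rewrite mem_enum mem_below => xm ->; rewrite mem_iota add0n.
Qed.

Lemma perm_on_below_fix i w :
  perm_on (below i.+1) w -> w i = i -> perm_on (below i) w.
Proof.
move=> /subsetP on_w wi; apply/subsetP => x wx; have := on_w x wx.
rewrite !mem_below ltnS leq_eqVlt => /orP[/eqP/val_inj xi | //].
by rewrite inE xi wi eqxx in wx.
Qed.

Lemma RsetP i r :
  reflect (r = 1 \/ exists k a b : 'I_n,
             [/\ k < i, a = 0%N :> nat, b = 1%N :> nat & r = tperm k i * tperm a b])
          (r \in Rset i).
Proof.
rewrite inE; apply: (iffP orP) => [[/eqP-> | ] | [-> | ]]; [by left | | by left | ].
  move=> /existsP[k /existsP[a /existsP[b /and4P[ki /eqP a0 /eqP b1 /eqP->]]]].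
  by right; exists k, a, b.
move=> [k [a [b [ki a0 b1 ->]]]]; right.
by apply/existsP; exists k; apply/existsP; exists a; apply/existsP; exists b;
   rewrite /= ki a0 b1 !eqxx.
Qed.

Lemma Rset_perm_on i m r : r \in Rset i -> i < m -> perm_on (below m) r.
Proof.
case/RsetP => [-> _ | [k [a [b [ki a0 b1 ->]]]] im]; first exact: perm_on1.
apply: perm_onM; apply: subset_trans (tperm_on _ _) _;
  by apply/subsetP => x; rewrite mem_below !inE => /orP[]/eqP->; lia.
Qed.

Lemma Rset_even i r : r \in Rset i -> ~~ odd_perm r.
Proof.
case/RsetP => [-> | [k [a [b [ki a0 b1 ->]]]]]; first by rewrite odd_perm1.
have ki' : k != i by rewrite -val_eqE /=; lia.
have ab : a != b by rewrite -val_eqE /=; lia.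
by rewrite odd_permM !odd_tperm ki' ab.
Qed.

Lemma Rset_tperm_inv i k a b :
  2 <= i -> a = 0%N :> nat -> b = 1%N :> nat -> (tperm k i * tperm a b)^-1 i = k.
Proof.
move=> i2 a0 b1; rewrite invMg !tpermV permM (@tpermD _ a b i) ?tpermR //;
  by rewrite -val_eqE /=; lia.
Qed.

Lemma Rset_inv_inj i r1 r2 :
  2 <= i -> r1 \in Rset i -> r2 \in Rset i -> r1^-1 i = r2^-1 i -> r1 = r2.
Proof.
move=> i2 /RsetP[-> | [k1 [a1 [b1 [k1i a10 b11 ->]]]]]
          /RsetP[-> | [k2 [a2 [b2 [k2i a20 b21 ->]]]]] //;
  rewrite ?invg1 ?perm1 ?Rset_tperm_inv //.
- by move=> ik2; rewrite -ik2 ltnn in k2i.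
- by move=> k1i'; rewrite k1i' ltnn in k1i.
by move=> <-; congr (_ * tperm _ _); apply: val_inj; rewrite /= ?a10 ?a20 ?b11 ?b21.
Qed.

Lemma Rset_inv_surj i k : 2 <= i -> k <= i -> exists2 r, r \in Rset i & r^-1 i = k.
Proof.
move=> i2; rewrite leq_eqVlt => /orP[/eqP/val_inj-> | ki].
  by exists 1; [apply/RsetP; left | rewrite invg1 perm1].
have i_lt_n := ltn_ord i.
have n0 : 0 < n by lia.
have n1 : 1 < n by lia.
exists (tperm k i * tperm (Ordinal n0) (Ordinal n1)); last exact: Rset_tperm_inv.
by apply/RsetP; right; exists k, (Ordinal n0), (Ordinal n1).
Qed.

Lemma Rset_peel i v :
  2 <= i -> perm_on (below i.+1) v ->
  exists2 r, r \in Rset i & perm_on (below i) (r^-1 * v).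
Proof.
move=> i2 on_v.
have vVi_le : v^-1 i <= i.
  by have := perm_closed i (perm_onV on_v); rewrite !mem_below ltnS ltnSn.
have [r Ri rVi] := Rset_inv_surj i2 vVi_le.
exists r => //; apply: perm_on_below_fix; last by rewrite permM rVi permKV.
by apply: perm_onM (perm_onV (Rset_perm_on Ri _)) on_v.
Qed.

Definition Rset_family f := forall i : 'I_n, 2 <= i -> f i \in Rset i.

Lemma Rset_prod_perm_on i (s : seq 'I_n) f :
  Rset_family f -> all [pred j : 'I_n | 2 <= j < i] s ->
  perm_on (below i) (\prod_(j <- s) f j).
Proof.
move=> Rf /allP s_bnd; apply: perm_on_prod => j /s_bnd /andP[j2 ji].
exact: Rset_perm_on (Rf j j2) ji.
Qed.

Lemma gt_ord_trans : transitive (fun i j : 'I_n => j < i).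
Proof. by move=> j i k ij jk; apply: ltn_trans jk ij. Qed.

Lemma prod_Rset_exists (s : seq 'I_n) m v :
  sorted (fun i j => j < i) s -> (forall x, (x \in s) = (2 <= x < m)) ->
  perm_on (below m) v -> ~~ odd_perm v ->
  exists2 f, Rset_family f & v = \prod_(i <- s) f i.
Proof.
elim: s m v => [|i s IHs] m v.
  move=> _ no_index on_v v_even; exists (fun=> 1) => [i _ | ].
    by apply/RsetP; left.
  rewrite big_nil; apply: even_perm_on_card2 (card_below 2) _ v_even.
  apply: subset_trans on_v _; apply/subsetP => x; rewrite !mem_below => xm.
  by have := no_index x; rewrite in_nil; lia.
rewrite /= path_sortedE; last exact: gt_ord_trans.
move=> /andP[/allP s_lt_i s_sorted] mem_is on_v v_even.
have /andP[i2 im] : 2 <= i < m by rewrite -mem_is mem_head.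
have mem_s x : (x \in s) = (2 <= x < i).
  apply/idP/andP => [xs | [x2 xi]].
    have /andP[x2 _] : 2 <= x < m by rewrite -mem_is inE xs orbT.
    by rewrite x2 (s_lt_i x xs).
  have : x \in i :: s by rewrite mem_is x2 /=; lia.
  by rewrite inE => /orP[/eqP xi' | //]; rewrite xi' ltnn in xi.
have on_v_i : perm_on (below i.+1) v.
  apply: subset_trans on_v _; apply/subsetP => x; rewrite !mem_below => xm.
  rewrite ltnS leqNgt; apply/negP => ix.
  have : x \in i :: s by rewrite mem_is xm andbT; lia.
  by rewrite inE mem_s => /orP[/eqP xi | /andP[_ xi]]; [rewrite xi ltnn in ix | lia].
have [r Ri on_rv] := Rset_peel i2 on_v_i.
have rv_even : ~~ odd_perm (r^-1 * v).
  by rewrite odd_permM odd_permV (negbTE (Rset_even Ri)).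
have [f Rf Ef] := IHs i _ s_sorted mem_s on_rv rv_even.
exists (fun j => if j == i then r else f j).
  by move=> j j2; case: eqP => [-> | _]; [exact: Ri | exact: Rf].
rewrite big_cons eqxx -[v](mulKVg r) Ef; congr (_ * _); apply: eq_big_seq => j js.
by case: eqP => // ji; move: (s_lt_i j js); rewrite ji ltnn.
Qed.

Lemma prod_Rset_inj (s : seq 'I_n) f g :
  Rset_family f -> Rset_family g ->
  sorted (fun i j => j < i) s -> all [pred i : 'I_n | 2 <= i] s ->
  \prod_(i <- s) f i = \prod_(i <- s) g i -> {in s, f =1 g}.
Proof.
move=> Rf Rg; elim: s => [// | i s IHs].
rewrite /= path_sortedE; last exact: gt_ord_trans.
move=> /andP[s_lt_i s_sorted] /andP[i2 s2]; rewrite !big_cons => eqfg.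
have s_bnd : all [pred j : 'I_n | 2 <= j < i] s.
  by apply/allP => j js; apply/andP; split; [exact: (allP s2) | exact: (allP s_lt_i)].
have inv_at_i h : Rset_family h -> (h i * \prod_(j <- s) h j)^-1 i = (h i)^-1 i.
  move=> Rh; rewrite invMg permM.
  by rewrite (out_perm (perm_onV (Rset_prod_perm_on Rh s_bnd))) // mem_below ltnn.
have fgi : f i = g i.
  apply: Rset_inv_inj (Rf i i2) (Rg i i2) _ => //.
  by rewrite -(inv_at_i f Rf) -(inv_at_i g Rg) eqfg.
move: eqfg; rewrite fgi => /mulgI eqfg j; rewrite inE => /orP[/eqP-> // | js].
exact: IHs.
Qed.

Definition factor_indices : seq 'I_n := [seq x : 'I_n <- rev (enum 'I_n) | 2 <= x].

Lemma mem_factor_indices x : (x \in factor_indices) = (2 <= x < n).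
Proof. by rewrite mem_filter mem_rev mem_enum ltn_ord andbT. Qed.

Lemma sorted_factor_indices : sorted (fun i j => j < i) factor_indices.
Proof.
apply: sorted_filter; first exact: gt_ord_trans.
by rewrite rev_sorted; have := iota_ltn_sorted 0 n; rewrite -val_enum_ord sorted_map.
Qed.

Lemma paper_prodE f : paper_prod f = \prod_(i <- factor_indices) f i.
Proof. by rewrite big_filter. Qed.

End ProductOfR.

Theorem theorem4p2 (n : nat) (hn : (3 <= n)%N) (v : {perm 'I_n}) (hv : ~~ odd_perm v) :
  (exists f : 'I_n -> {perm 'I_n},
      (forall i : 'I_n, (2 <= val i)%N -> f i \in Rset i) /\ v = paper_prod f) /\
  (forall f g : 'I_n -> {perm 'I_n},
      (forall i : 'I_n, (2 <= val i)%N -> f i \in Rset i) ->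
      (forall i : 'I_n, (2 <= val i)%N -> g i \in Rset i) ->
      v = paper_prod f -> v = paper_prod g ->
      forall i : 'I_n, (2 <= val i)%N -> f i = g i).
Proof.
split.
  have on_v : perm_on (below n n) v by apply/subsetP => x _; rewrite mem_below ltn_ord.
  have [f Rf Ef] :=
    prod_Rset_exists (sorted_factor_indices n) (@mem_factor_indices n) on_v hv.
  by exists f; rewrite paper_prodE.
move=> f g Rf Rg ->; rewrite !paper_prodE => eqfg i i2.
have indices_ge2 : all [pred x : 'I_n | 2 <= x] (factor_indices n).
  by apply/allP => x; rewrite mem_factor_indices => /andP[].
apply: (prod_Rset_inj Rf Rg (sorted_factor_indices n) indices_ge2 eqfg).
by rewrite mem_factor_indices i2 ltn_ord.
Qed.
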